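(* Let $T$, $\mathcal{S}=\mathcal{S}_+\cup\mathcal{S}_-$, $\Psi$, $U$, $\mu$, $P_\mu$ and $V_\mu$ be as in the context. Consider the discrete-time QBD with phase space $\mathcal{S}$ and transition blocks $$B_{-1}=\begin{bmatrix}0&(I-\mu^{-1}T_{++})^{-1}P_{\mu+-}\\0&V_\mu\end{bmatrix},\quad B_0=0,\quad B_1=\begin{bmatrix}(I-\mu^{-1}T_{++})^{-1}&0\\0&0\end{bmatrix}.$$ Then its $\mathcal{G}$-matrix is $$\mathcal{G}_B=\begin{bmatrix}0&\Psi\\0&V_\mu\end{bmatrix}.$$
   Context: $T$ is the generator of a continuous-time Markov chain on a finite set $\mathcal{S}=\mathcal{S}_+\cup\mathcal{S}_-$ (disjoint, both nonempty), partitioned into blocks $T_{++},T_{+-},T_{-+},T_{--}$ according to $\mathcal{S}_\pm$. $\Psi$ is the minimal nonnegative solution of $T_{+-}+\Psi T_{--}+T_{++}\Psi+\Psi T_{-+}\Psi=0$ (the first-return probability matrix of the unit-rate fluid queue with phase generator $T$, rates $+1$ on $\mathcal{S}_+$ and $-1$ on $\mathcal{S}_-$), and $U:=T_{--}+T_{-+}\Psi$. $\mu>0$ satisfies $\mu\ge\max_i|T_{ii}|$; $P_\mu:=I+\mu^{-1}T$ with blocks $P_{\mu++}$ etc., and $V_\mu:=I+\mu^{-1}U$. A discrete-time quasi-birth-death process (QBD) with transition blocks $L_{-1},L_0,L_1$ is a Markov chain $\{(Y_n,\kappa_n)\}$ on $\mathbb{Z}\times\mathcal{S}$ with $\mathbb{P}[Y_n=k+d,\kappa_n=j\mid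 Y_{n-1}=k,\kappa_{n-1}=i]=(L_d)_{ij}$ for $d\in\{-1,0,1\}$. Its $\mathcal{G}$-matrix has entries $\mathcal{G}_{ij}=\mathbb{P}[\theta<\infty,\kappa_\theta=j\mid Y_0=k,\kappa_0=i]$ with $\theta=\inf\{n>0:Y_n=k-1\}$. Matrices are partitioned into blocks according to $\mathcal{S}_+,\mathcal{S}_-$. *)

From HB Require Import structures.
From mathcomp Require Import all_boot all_order all_algebra.
From mathcomp Require Import all_classical all_reals all_analysis.
Set Implicit Arguments. Unset Strict Implicit. Unset Printing Implicit Defensive.
Import Order.TTheory GRing.Theory Num.Theory.
Import numFieldNormedType.Exports.
Local Open Scope ring_scope.
Local Open Scope classical_set_scope.

(* Phase space S = S_+ (first np indices) ∪ S_- (last nm indices). *)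

Definition is_generator (R : realType) (N : nat) (T : 'M[R]_N) : Prop :=
  (forall i j, i != j -> 0 <= T i j) /\ (forall i, \sum_(j < N) T i j = 0).

Definition nonneg_mx (R : realType) (m n : nat) (X : 'M[R]_(m, n)) : Prop :=
  forall i j, 0 <= X i j.

Definition riccati (R : realType) (np nm : nat) (T : 'M[R]_(np + nm))
  (X : 'M[R]_(np, nm)) : Prop :=
  ursubmx T + X *m drsubmx T + ulsubmx T *m X + X *m dlsubmx T *m X = 0.

Definition is_min_nonneg_riccati_sol (R : realType) (np nm : nat)
  (T : 'M[R]_(np + nm)) (Psi : 'M[R]_(np, nm)) : Prop :=
  [/\ nonneg_mx Psi, riccati T Psi &
      forall X, nonneg_mx X -> riccati T X -> forall i j, Psi i j <= X i j].

Definition Umx (R : realType) (np nm : nat) (T : 'M[R]_(np + nm))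
  (Psi : 'M[R]_(np, nm)) : 'M[R]_nm := drsubmx T + dlsubmx T *m Psi.
Definition Vmx (R : realType) (np nm : nat) (T : 'M[R]_(np + nm))
  (Psi : 'M[R]_(np, nm)) (mu : R) : 'M[R]_nm := 1%:M + mu^-1 *: Umx T Psi.
Definition Pmx (R : realType) (N : nat) (T : 'M[R]_N) (mu : R) : 'M[R]_N :=
  1%:M + mu^-1 *: T.

(* Taboo probabilities of a level-independent QBD with blocks Lm (=L_{-1}),
   L0, Lp (=L_1):  (qbd_taboo n l) i j =
   P[Y_n = k + l, kappa_n = j, Y_1, ..., Y_n >= k | Y_0 = k, kappa_0 = i]. *)
Fixpoint qbd_taboo (R : realType) (N : nat) (Lm L0 Lp : 'M[R]_N) (n l : nat)
  : 'M[R]_N :=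
  match n with
  | 0 => if l == 0%N then 1%:M else 0
  | n'.+1 => qbd_taboo Lm L0 Lp n' l *m L0 + qbd_taboo Lm L0 Lp n' l.+1 *m Lm
             + (if l is l'.+1 then qbd_taboo Lm L0 Lp n' l' *m Lp else 0)
  end.

(* G is the G-matrix of the QBD: G i j = P[theta < oo, kappa_theta = j | ...]
   = sum_{n >= 0} P[theta = n+1, kappa_{n+1} = j | Y_0 = k, kappa_0 = i],
   where P[theta = n+1, kappa_theta = j] = (qbd_taboo n 0 *m Lm) i j. *)
Definition is_Gmatrix (R : realType) (N : nat) (Lm L0 Lp G : 'M[R]_N) : Prop :=
  forall i j,
    (fun n : nat => (\sum_(k < n) (qbd_taboo Lm L0 Lp k 0 *m Lm)) i j)
      @ \oo --> G i j.

(* Under B_1 a phase of S_+ climbs with A := (I - mu^-1 T_{++})^-1; under B_{-1}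
   it crosses down into S_- with C := A P_{mu+-}, and a phase of S_- descends with
   V_mu.  A first passage one level down from S_+ thus climbs j levels, crosses
   and descends j levels, so the upper-right block of G is sum_j A^j C V_mu^j,
   while from S_- the first step already goes down with V_mu.
   The partial sums of this series are the iterates from 0 of the monotone map
   Y |-> A (P_{mu+-} + Y V_mu), of which Psi is a fixed point (the Riccati equation
   rewritten).  Their limit Y <= Psi is a post-fixed point of the Riccati map
   Z |-> A (P_{mu+-} + Z (I + mu^-1 (T_{--} + T_{-+} Z))), so iterating that map
   from 0 yields a nonnegative Riccati solution below Y, and minimality of Psi
   gives Y = Psi. *)

From HB Require Import structures.
From mathcomp Require Import all_boot all_order all_algebra.
From mathcomp Require Import all_classical all_reals all_analysis.
From mathcomp Require Import zify ring lra.
Import Order.TTheory GRing.Theory Num.Theory.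
Import numFieldNormedType.Exports.
Set Implicit Arguments. Unset Strict Implicit. Unset Printing Implicit Defensive.
Local Open Scope ring_scope.
Local Open Scope classical_set_scope.

Section EntrywiseOrder.
Variable R : realType.

Definition mxle p q (X Y : 'M[R]_(p, q)) := forall i j, X i j <= Y i j.

Lemma nonneg_mxE p q (X : 'M[R]_(p, q)) : nonneg_mx X <-> mxle 0 X.
Proof. by split=> X_ge0 i j; have := X_ge0 i j; rewrite mxE. Qed.

Lemma mxle_refl p q (X : 'M[R]_(p, q)) : mxle X X.
Proof. by move=> i j. Qed.

Lemma mxle_trans p q (X Y Z : 'M[R]_(p, q)) : mxle X Y -> mxle Y Z -> mxle X Z.
Proof. by move=> XY YZ i j; exact: le_trans (XY i j) (YZ i j). Qed.

Lemma mxle_anti p q (X Y : 'M[R]_(p, q)) : mxle X Y -> mxle Y X -> X = Y.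
Proof. by move=> XY YX; apply/matrixP => i j; apply/le_anti; rewrite XY YX. Qed.

Lemma mxleD p q (X Y X' Y' : 'M[R]_(p, q)) :
  mxle X Y -> mxle X' Y' -> mxle (X + X') (Y + Y').
Proof. by move=> XY XY' i j; rewrite !mxE lerD. Qed.

Lemma mxle_mull p q s (A : 'M[R]_(p, q)) (X Y : 'M[R]_(q, s)) :
  nonneg_mx A -> mxle X Y -> mxle (A *m X) (A *m Y).
Proof.
by move=> A_ge0 XY i j; rewrite !mxE; apply: ler_sum => k _; exact: ler_wpM2l.
Qed.

Lemma mxle_mulr p q s (A : 'M[R]_(q, s)) (X Y : 'M[R]_(p, q)) :
  nonneg_mx A -> mxle X Y -> mxle (X *m A) (Y *m A).
Proof.
by move=> A_ge0 XY i j; rewrite !mxE; apply: ler_sum => k _; exact: ler_wpM2r.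
Qed.

Lemma nonneg_mxD p q (X Y : 'M[R]_(p, q)) :
  nonneg_mx X -> nonneg_mx Y -> nonneg_mx (X + Y).
Proof. by move=> X_ge0 Y_ge0 i j; rewrite mxE addr_ge0. Qed.

Lemma nonneg_mxM p q s (X : 'M[R]_(p, q)) (Y : 'M[R]_(q, s)) :
  nonneg_mx X -> nonneg_mx Y -> nonneg_mx (X *m Y).
Proof.
by move=> X_ge0 Y_ge0 i j; rewrite mxE sumr_ge0 // => k _; rewrite mulr_ge0.
Qed.

Lemma nonneg_mx1 p : nonneg_mx (1%:M : 'M[R]_p).
Proof. by move=> i j; rewrite mxE ler0n. Qed.

Lemma nonneg_submx m1 m2 n1 n2 (X : 'M[R]_(m1 + m2, n1 + n2)) :
  nonneg_mx X ->
  [/\ nonneg_mx (ulsubmx X), nonneg_mx (ursubmx X),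
      nonneg_mx (dlsubmx X) & nonneg_mx (drsubmx X)].
Proof. by move=> X_ge0; split=> i j; rewrite !mxE. Qed.

End EntrywiseOrder.

Section EntrywiseLimits.
Variable R : realType.

Definition mxcvg p q (f : nat -> 'M[R]_(p, q)) (L : 'M[R]_(p, q)) :=
  forall i j, (fun n => f n i j) @ \oo --> L i j.

Lemma mxcvg_cst p q (L : 'M[R]_(p, q)) : mxcvg (fun=> L) L.
Proof. by move=> i j; exact: cvg_cst. Qed.

Lemma mxcvgD p q (f g : nat -> 'M[R]_(p, q)) L K :
  mxcvg f L -> mxcvg g K -> mxcvg (fun n => f n + g n) (L + K).
Proof.
by move=> fL gK i j; under eq_cvg do rewrite mxE; rewrite mxE; exact: cvgD.
Qed.

Lemma mxcvgM p q s (f : nat -> 'M[R]_(p, q)) (g : nat -> 'M[R]_(q, s)) L K :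
  mxcvg f L -> mxcvg g K -> mxcvg (fun n => f n *m g n) (L *m K).
Proof.
move=> fL gK i j; under eq_cvg do rewrite mxE; rewrite mxE.
by apply: (cvg_big (@add_continuous _)) => k _; exact: cvgM.
Qed.

Lemma mxcvg_block m1 m2 n1 n2 (f1 : nat -> 'M[R]_(m1, n1))
    (f2 : nat -> 'M[R]_(m1, n2)) (f3 : nat -> 'M[R]_(m2, n1))
    (f4 : nat -> 'M[R]_(m2, n2)) L1 L2 L3 L4 :
  mxcvg f1 L1 -> mxcvg f2 L2 -> mxcvg f3 L3 -> mxcvg f4 L4 ->
  mxcvg (fun n => block_mx (f1 n) (f2 n) (f3 n) (f4 n)) (block_mx L1 L2 L3 L4).
Proof.
move=> c1 c2 c3 c4 i j.
case: (split_ordP i) => {}i ->; case: (split_ordP j) => {}j ->.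
- by under eq_cvg do rewrite block_mxEul; rewrite block_mxEul; exact: c1.
- by under eq_cvg do rewrite block_mxEur; rewrite block_mxEur; exact: c2.
- by under eq_cvg do rewrite block_mxEdl; rewrite block_mxEdl; exact: c3.
- by under eq_cvg do rewrite block_mxEdr; rewrite block_mxEdr; exact: c4.
Qed.

Lemma mxcvg_unique p q (f : nat -> 'M[R]_(p, q)) L K :
  mxcvg f L -> mxcvg f K -> L = K.
Proof. by move=> fL fK; apply/matrixP => i j; exact: cvg_unique (fL i j) (fK i j). Qed.

Lemma mxcvg_shiftS p q (f : nat -> 'M[R]_(p, q)) L :
  mxcvg (fun n => f n.+1) L <-> mxcvg f L.
Proof. by split=> fL i j; have := fL i j; rewrite -(cvg_shiftS (fun n => f n i j)). Qed.

Lemma mxcvg_comp p q (f : nat -> 'M[R]_(p, q)) (phi : nat -> nat) L :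
  phi n @[n --> \oo] --> \oo -> mxcvg f L -> mxcvg (f \o phi) L.
Proof. by move=> phi_oo fL i j; exact: cvg_comp phi_oo (fL i j). Qed.

Lemma mxcvg_le p q (f : nat -> 'M[R]_(p, q)) L B :
  mxcvg f L -> (forall n, mxle (f n) B) -> mxle L B.
Proof.
move=> fL fB i j; apply: (closed_cvg _ (@closed_le _ (B i j)) _ _ (fL i j)).
by apply: nearW => n; exact: fB.
Qed.

Lemma mxcvg_ge p q (f : nat -> 'M[R]_(p, q)) L B :
  mxcvg f L -> (forall n, mxle B (f n)) -> mxle B L.
Proof.
move=> fL fB i j; apply: (closed_cvg _ (@closed_ge _ (B i j)) _ _ (fL i j)).
by apply: nearW => n; exact: fB.
Qed.

Lemma nondecreasing_mxcvg p q (f : nat -> 'M[R]_(p, q)) B :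
  (forall n, mxle (f n) (f n.+1)) -> (forall n, mxle (f n) B) ->
  exists L, mxcvg f L.
Proof.
move=> f_incr fB; exists (\matrix_(i, j) limn (fun n => f n i j)) => i j.
rewrite mxE; apply: nondecreasing_is_cvgn.
  by apply/nondecreasing_seqP => n; exact: f_incr.
by exists (B i j) => _ [n _ <-]; exact: fB.
Qed.

Lemma iter_mxcvg_fixpoint p q (F : 'M[R]_(p, q) -> 'M[R]_(p, q)) X :
  (forall Z Z', mxle 0 Z -> mxle Z Z' -> mxle (F Z) (F Z')) ->
  (forall f L, mxcvg f L -> mxcvg (F \o f) (F L)) ->
  mxle 0 (F 0) -> mxle 0 X -> mxle (F X) X ->
  exists2 Z, mxcvg (fun k => iter k F 0) Z & [/\ F Z = Z, mxle 0 Z & mxle Z X].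
Proof.
move=> F_mono F_cont F0_ge0 X_ge0 FX_le.
pose Z k := iter k F 0.
have Z_ge0 k : mxle 0 (Z k).
  elim: k => [|k IH]; first exact: mxle_refl.
  exact: mxle_trans F0_ge0 (F_mono _ _ (mxle_refl 0) IH).
have Z_incr k : mxle (Z k) (Z k.+1).
  by elim: k => [|k IH] //; exact: F_mono (Z_ge0 k) IH.
have Z_le k : mxle (Z k) X.
  by elim: k => [|k IH] //; exact: mxle_trans (F_mono _ _ (Z_ge0 k) IH) FX_le.
have [L ZL] := nondecreasing_mxcvg Z_incr Z_le.
exists L => //; split; last exact: mxcvg_le ZL Z_le; last exact: mxcvg_ge ZL Z_ge0.
by apply: mxcvg_unique (F_cont _ _ ZL) _; apply/(mxcvg_shiftS Z).
Qed.

End EntrywiseLimits.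

Section DominantZMatrix.
Variables (R : realType) (n : nat) (M : 'M[R]_n).
Hypotheses (M_offdiag_le0 : forall i j, i != j -> M i j <= 0)
  (M_rowsum_gt0 : forall i, 0 < \sum_j M i j).

(* At a row i where column j of X is minimal, (M *m X) i j <= (\sum_k M i k) * X i j. *)
Lemma nonneg_mx_of_mulmx k (X : 'M[R]_(n, k)) : nonneg_mx (M *m X) -> nonneg_mx X.
Proof.
move=> MX_ge0 i0 j; rewrite leNgt; apply/negP => Xi0_lt0.
have [i _ Xi_min] := @arg_minP _ _ _ i0 predT (fun i => X i j) isT.
have Xi_lt0 : X i j < 0 := le_lt_trans (Xi_min i0 isT) Xi0_lt0.
suff : (M *m X) i j < 0 by rewrite ltNge MX_ge0.
rewrite mxE (@le_lt_trans _ _ ((\sum_k M i k) * X i j)) ?pmulr_rlt0 //.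
rewrite mulr_suml; apply: ler_sum => l _.
have [<- //|ne] := eqVneq i l.
by apply: ler_wnM2l; [exact: M_offdiag_le0 | exact: Xi_min].
Qed.

Lemma unitmx_dominant : M \in unitmx.
Proof.
rewrite unitmxE unitfE -det_tr; apply/negP => /det0P [v /eqP v_neq0 vM0].
have Mv0 : M *m v^T = 0 by rewrite -[M]trmxK -trmx_mul vM0 trmx0.
have v_ge0 : nonneg_mx v^T.
  by apply: nonneg_mx_of_mulmx; rewrite Mv0 => ? ?; rewrite mxE.
have Nv_ge0 : nonneg_mx (- v^T).
  by apply: nonneg_mx_of_mulmx; rewrite mulmxN Mv0 oppr0 => ? ?; rewrite mxE.
apply: v_neq0; apply/matrixP => i j.
by apply/le_anti; have := Nv_ge0 j i; have := v_ge0 j i; rewrite !mxE oppr_ge0 => -> ->.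
Qed.

Lemma nonneg_invmx : nonneg_mx (invmx M).
Proof.
by apply: nonneg_mx_of_mulmx; rewrite mulmxV ?unitmx_dominant //; exact: nonneg_mx1.
Qed.

End DominantZMatrix.

Section Uniformization.
Variables (R : realType) (mu : R).

Lemma Pmx_ge0 N (T : 'M[R]_N) :
  is_generator T -> 0 < mu -> (forall i, `|T i i| <= mu) -> nonneg_mx (Pmx T mu).
Proof.
move=> [T_offdiag _] mu_gt0 T_diag i j; rewrite !mxE.
case: eqVneq => [<-|ne]; last first.
  by rewrite add0r mulr_ge0 ?invr_ge0 ?(ltW mu_gt0) ?T_offdiag.
have := T_diag i; rewrite ler_norml => /andP[Tii_ge _].
rewrite -[true%:R](mulVf (lt0r_neq0 mu_gt0)) -mulrDr mulr_ge0 ?invr_ge0 ?(ltW mu_gt0) //.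
lra.
Qed.

Lemma ursubmx_Pmx p q (T : 'M[R]_(p + q)) : ursubmx (Pmx T mu) = mu^-1 *: ursubmx T.
Proof. by apply/matrixP => i j; rewrite !mxE eq_lrshift add0r. Qed.

Lemma dlsubmx_Pmx p q (T : 'M[R]_(p + q)) : dlsubmx (Pmx T mu) = mu^-1 *: dlsubmx T.
Proof. by apply/matrixP => i j; rewrite !mxE eq_rlshift add0r. Qed.

Lemma drsubmx_Pmx p q (T : 'M[R]_(p + q)) :
  drsubmx (Pmx T mu) = 1%:M + mu^-1 *: drsubmx T.
Proof. by apply/matrixP => i j; rewrite !mxE eq_rshift. Qed.

End Uniformization.

Section UpDownQBD.
Variables (R : realType) (np nm : nat).
Variables (A : 'M[R]_np) (C : 'M[R]_(np, nm)) (V : 'M[R]_nm).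

Local Notation Bdown := (block_mx (0 : 'M[R]_np) C 0 V).
Local Notation Bup := (block_mx A 0 0 (0 : 'M[R]_nm)).
Local Notation taboo := (qbd_taboo Bdown 0 Bup).

(* A taboo path from a phase in S_+ climbs j levels with A, crosses to S_- with C,
   then descends r levels with V: it has length n = j + 1 + r and ends at level
   l = j - 1 - r, whence j = (n + l)/2 and r = (n - l)/2 - 1. *)
Definition taboo_up n l : 'M[R]_np := if l == n then A ^+ n else 0.

Definition taboo_cross n l : 'M[R]_(np, nm) :=
  if (l < n)%N && ~~ odd (n + l) then A ^+ (n + l)./2 *m C *m V ^+ ((n - l)./2).-1
  else 0.

Definition first_passage_sum k := \sum_(j < k) A ^+ j *m C *m V ^+ j.

Lemma taboo_up_succ n l :
  taboo_up n.+1 l = if l is l'.+1 then taboo_up n l' *m A else 0.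
Proof.
case: l => [|l]; rewrite /taboo_up //= eqSS.
by case: eqP; rewrite ?mul0mx // exprSr mulmxE.
Qed.

Lemma taboo_cross_succ n l :
  taboo_cross n.+1 l = taboo_up n l.+1 *m C + taboo_cross n l.+1 *m V.
Proof.
rewrite /taboo_up /taboo_cross; case: eqVneq => [<-|ne].
  rewrite ltnn mul0mx addr0 ifT; last by lia.
  have -> : (l.+2 + l)./2 = l.+1 by lia.
  have -> : ((l.+2 - l)./2).-1 = 0%N by lia.
  by rewrite expr0 mulmx1.
rewrite mul0mx add0r addSnnS.
case: ifP => [lt|nlt]; last first.
  by rewrite ifF ?mul0mx //; move: nlt ne; lia.
rewrite ifT; last by move: lt ne; lia.
have -> : ((n.+1 - l)./2).-1 = ((n - l.+1)./2).-1.+1 by move: lt ne; lia.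
by rewrite exprSr -mulmxE !mulmxA.
Qed.

Lemma mulmx_block_down (X : 'M[R]_np) (Y : 'M[R]_(np, nm)) (Z : 'M[R]_(nm, np))
    (W : 'M[R]_nm) :
  block_mx X Y Z W *m Bdown = block_mx 0 (X *m C + Y *m V) 0 (Z *m C + W *m V).
Proof. by rewrite mulmx_block !mulmx0 !addr0. Qed.

Lemma mulmx_block_up (X : 'M[R]_np) (Y : 'M[R]_(np, nm)) (Z : 'M[R]_(nm, np))
    (W : 'M[R]_nm) :
  block_mx X Y Z W *m Bup = block_mx (X *m A) 0 (Z *m A) 0.
Proof. by rewrite mulmx_block !mulmx0 !addr0. Qed.

Lemma qbd_tabooE n l :
  taboo n l = block_mx (taboo_up n l) (taboo_cross n l) 0
                       (if (n == 0%N) && (l == 0%N) then 1%:M else 0).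
Proof.
elim: n l => [|n IH] l /=.
  case: l => [|l]; rewrite /taboo_up /taboo_cross /= ?block_mx0 //.
  by rewrite expr0 -scalar_mx_block.
have -> : (if l is l'.+1 then taboo n l' *m Bup else 0) = block_mx (taboo_up n.+1 l) 0 0 0.
  case: l => [|l]; first by rewrite taboo_up_succ block_mx0.
  by rewrite IH mulmx_block_up taboo_up_succ !(mulmx0, mul0mx, addr0, add0r).
rewrite mulmx0 add0r IH mulmx_block_down add_block_mx taboo_cross_succ.
by rewrite andbF !(mulmx0, mul0mx, addr0, add0r).
Qed.

Lemma qbd_taboo_level0_down n :
  taboo n 0 *m Bdown =
  block_mx 0 (if odd n then 0 else A ^+ n./2 *m C *m V ^+ n./2) 0
             (if n == 0%N then V else 0).
Proof.
rewrite qbd_tabooE mulmx_block_down andbT !(mulmx0, mul0mx, addr0, add0r).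
congr block_mx; last by case: eqP; rewrite ?mul1mx ?mul0mx.
rewrite /taboo_up /taboo_cross addn0 subn0.
have [->|n_gt0] := posnP n; first by rewrite expr0 mul1mx mulmx1 mul0mx addr0.
rewrite eq_sym (gtn_eqF n_gt0) mul0mx add0r.
case odd_n: (odd n); first by rewrite mul0mx.
have [k ->] : exists k, n./2 = k.+1 by exists n./2.-1; move: n_gt0 odd_n; lia.
by rewrite [V ^+ k.+1]exprSr -mulmxE !mulmxA.
Qed.

Lemma qbd_Gmatrix_partial_sum n :
  \sum_(k < n) taboo k 0 *m Bdown =
  block_mx 0 (first_passage_sum (uphalf n)) 0 (if n == 0%N then 0 else V).
Proof.
elim: n => [|n IH]; first by rewrite big_ord0 /first_passage_sum big_ord0 block_mx0.
rewrite big_ord_recr /= IH qbd_taboo_level0_down add_block_mx !addr0.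
congr block_mx; last by case: eqP; rewrite ?add0r ?addr0.
rewrite uphalf_half; case: (odd n); first by rewrite addr0.
by rewrite /first_passage_sum big_ord_recr.
Qed.

Lemma is_Gmatrix_up_down G :
  mxcvg first_passage_sum G -> is_Gmatrix Bdown 0 Bup (block_mx 0 G 0 V).
Proof.
move=> sum_G; apply/(mxcvg_shiftS (fun n => \sum_(k < n) taboo k 0 *m Bdown)).
under [X in mxcvg X _]funext => n do rewrite qbd_Gmatrix_partial_sum.
apply: mxcvg_block; try exact: mxcvg_cst.
apply: mxcvg_comp sum_G; apply/cvgnyPge => k.
by exists k.*2 => // n /= n_ge; lia.
Qed.

End UpDownQBD.

Section RiccatiFixpoint.
Variables (R : realType) (np nm : nat) (T : 'M[R]_(np + nm)) (mu : R).
Hypotheses (T_gen : is_generator T) (mu_gt0 : 0 < mu)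
  (T_diag_le : forall i, `|T i i| <= mu).

Local Notation P := (Pmx T mu).

Lemma Pmx_blocks_ge0 :
  [/\ nonneg_mx (ulsubmx P), nonneg_mx (ursubmx P),
      nonneg_mx (dlsubmx P) & nonneg_mx (drsubmx P)].
Proof. exact/nonneg_submx/Pmx_ge0. Qed.

Definition Wpp : 'M[R]_np := 1%:M - mu^-1 *: ulsubmx T.

Lemma Wpp_offdiag_le0 i j : i != j -> Wpp i j <= 0.
Proof.
move=> ne; rewrite !mxE (negbTE ne) sub0r oppr_le0 mulr_ge0 ?invr_ge0 ?(ltW mu_gt0) //.
by apply: T_gen.1; rewrite eq_shift.
Qed.

Lemma Wpp_rowsum_gt0 i : 0 < \sum_j Wpp i j.
Proof.
have := T_gen.2 (lshift nm i); rewrite big_split_ord /= => /eqP.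
rewrite addr_eq0 => /eqP rowT.
have Tpm_ge0 : 0 <= \sum_j T (lshift nm i) (rshift np j).
  by apply: sumr_ge0 => j _; apply: T_gen.1; rewrite eq_lrshift.
under eq_bigr do rewrite !mxE.
rewrite sumrB (bigD1 i) //= eqxx big1 ?addr0 => [|j]; last first.
  by rewrite eq_sym => /negbTE ->.
rewrite -mulr_sumr rowT mulrN opprK (lt_le_trans ltr01) // lerDl.
by rewrite mulr_ge0 ?invr_ge0 ?(ltW mu_gt0).
Qed.

Lemma invmx_Wpp_ge0 : nonneg_mx (invmx Wpp).
Proof. exact: nonneg_invmx Wpp_offdiag_le0 Wpp_rowsum_gt0. Qed.

Lemma VmxE Z : Vmx T Z mu = drsubmx P + dlsubmx P *m Z.
Proof. by rewrite /Vmx /Umx scalerDr addrA drsubmx_Pmx dlsubmx_Pmx scalemxAl. Qed.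

Lemma Vmx_ge0 Z : nonneg_mx Z -> nonneg_mx (Vmx T Z mu).
Proof.
have [_ _ Pmp_ge0 Pmm_ge0] := Pmx_blocks_ge0.
by move=> Z_ge0; rewrite VmxE; exact: nonneg_mxD Pmm_ge0 (nonneg_mxM Pmp_ge0 Z_ge0).
Qed.

Lemma le_Vmx Z Z' : mxle Z Z' -> mxle (Vmx T Z mu) (Vmx T Z' mu).
Proof.
have [_ _ Pmp_ge0 _] := Pmx_blocks_ge0.
by rewrite !VmxE => le_ZZ'; apply: mxleD (mxle_refl _) (mxle_mull Pmp_ge0 le_ZZ').
Qed.

Definition riccati_map Z := invmx Wpp *m (ursubmx P + Z *m Vmx T Z mu).

Lemma riccati_defect Z :
  Wpp *m Z - (ursubmx P + Z *m Vmx T Z mu) =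
  - (mu^-1 *: (ursubmx T + Z *m drsubmx T + ulsubmx T *m Z + Z *m dlsubmx T *m Z)).
Proof.
rewrite /Wpp /Vmx /Umx ursubmx_Pmx mulmxBl mul1mx mulmxDr mulmx1 -scalemxAl.
rewrite -scalemxAr mulmxDr mulmxA.
move: (ulsubmx T *m Z) (Z *m drsubmx T) (Z *m dlsubmx T *m Z) => X1 X2 X3.
by apply/matrixP => i j; rewrite !mxE; ring.
Qed.

Lemma riccati_mapP Z : riccati_map Z = Z <-> riccati T Z.
Proof.
have W_unit := unitmx_dominant Wpp_offdiag_le0 Wpp_rowsum_gt0.
rewrite /riccati_map /riccati; split=> [fixZ | ricZ].
  have : Wpp *m Z - (ursubmx P + Z *m Vmx T Z mu) = 0.
    by rewrite -{1}fixZ mulKVmx // subrr.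
  rewrite riccati_defect => /eqP; rewrite oppr_eq0 scaler_eq0 invr_eq0.
  by rewrite (gt_eqF mu_gt0) => /eqP.
have : Wpp *m Z - (ursubmx P + Z *m Vmx T Z mu) = 0.
  by rewrite riccati_defect ricZ scaler0 oppr0.
by move/eqP; rewrite subr_eq0 => /eqP <-; rewrite mulKmx.
Qed.

Lemma down_cross_ge0 : nonneg_mx (invmx Wpp *m ursubmx P).
Proof.
by have [_ Ppm_ge0 _ _] := Pmx_blocks_ge0; exact: nonneg_mxM invmx_Wpp_ge0 Ppm_ge0.
Qed.

Lemma riccati_map0_ge0 : mxle 0 (riccati_map 0).
Proof. by rewrite /riccati_map mul0mx addr0; apply/nonneg_mxE/down_cross_ge0. Qed.

Lemma le_riccati_map Z Z' :
  mxle 0 Z -> mxle Z Z' -> mxle (riccati_map Z) (riccati_map Z').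
Proof.
move=> /nonneg_mxE Z_ge0 le_ZZ'.
have Z'_ge0 : nonneg_mx Z' by move=> i j; exact: le_trans (Z_ge0 i j) (le_ZZ' i j).
apply: mxle_mull invmx_Wpp_ge0 (mxleD (mxle_refl _) _).
exact: mxle_trans (mxle_mulr (Vmx_ge0 Z_ge0) le_ZZ') (mxle_mull Z'_ge0 (le_Vmx le_ZZ')).
Qed.

Lemma mxcvg_riccati_map f L :
  mxcvg f L -> mxcvg (riccati_map \o f) (riccati_map L).
Proof.
move=> fL; have -> : riccati_map \o f =
    fun n => invmx Wpp *m (ursubmx P + f n *m (drsubmx P + dlsubmx P *m f n)).
  by apply/funext => n; rewrite /= /riccati_map VmxE.
rewrite /riccati_map VmxE.
apply: mxcvgM; first exact: mxcvg_cst.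
apply: mxcvgD; first exact: mxcvg_cst.
apply: mxcvgM => //.
apply: mxcvgD; first exact: mxcvg_cst.
apply: mxcvgM => //; exact: mxcvg_cst.
Qed.

Variable Psi : 'M[R]_(np, nm).
Hypothesis Psi_min : is_min_nonneg_riccati_sol T Psi.

Local Notation V := (Vmx T Psi mu).

Definition lin_riccati_map Y := invmx Wpp *m (ursubmx P + Y *m V).

Lemma first_passage_sum_iter k :
  first_passage_sum (invmx Wpp) (invmx Wpp *m ursubmx P) V k =
  iter k lin_riccati_map 0.
Proof.
elim: k => [|k IH]; first by rewrite /first_passage_sum big_ord0.
rewrite /= -IH /lin_riccati_map /first_passage_sum big_ord_recl expr0 mul1mx mulmx1.
rewrite mulmxDr mulmx_suml mulmx_sumr; congr (_ + _); apply: eq_bigr => j _.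
by rewrite /bump /= [invmx Wpp ^+ _]exprS [V ^+ _]exprSr -!mulmxE !mulmxA.
Qed.

Lemma mxcvg_first_passage_sum :
  mxcvg (first_passage_sum (invmx Wpp) (invmx Wpp *m ursubmx P) V) Psi.
Proof.
have [Psi_ge0 /riccati_mapP Psi_fix Psi_le] := Psi_min.
have lin_Psi_le : mxle (lin_riccati_map Psi) Psi by rewrite [X in mxle X]Psi_fix.
have V_ge0 := Vmx_ge0 Psi_ge0.
have lin_mono Y Y' :
    mxle 0 Y -> mxle Y Y' -> mxle (lin_riccati_map Y) (lin_riccati_map Y').
  move=> _ le_YY'; apply: mxle_mull invmx_Wpp_ge0 _.
  exact: mxleD (mxle_refl _) (mxle_mulr V_ge0 le_YY').
have lin_cont f L : mxcvg f L -> mxcvg (lin_riccati_map \o f) (lin_riccati_map L).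
  move=> fL; apply: mxcvgM; first exact: mxcvg_cst.
  by apply: mxcvgD; [exact: mxcvg_cst | apply: mxcvgM => //; exact: mxcvg_cst].
have lin0_ge0 : mxle 0 (lin_riccati_map 0).
  by rewrite /lin_riccati_map mul0mx addr0; apply/nonneg_mxE/down_cross_ge0.
have [Y sum_Y [Y_fix Y_ge0 Y_le]] := iter_mxcvg_fixpoint lin_mono lin_cont
  lin0_ge0 (proj1 (nonneg_mxE _) Psi_ge0) lin_Psi_le.
have ric_Y_le : mxle (riccati_map Y) Y.
  rewrite -{2}Y_fix; apply: mxle_mull invmx_Wpp_ge0 (mxleD (mxle_refl _) _).
  by apply: mxle_mull (le_Vmx Y_le); apply/nonneg_mxE.
have [Z _ [/riccati_mapP Z_ric Z_ge0 Z_le]] :=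
  iter_mxcvg_fixpoint le_riccati_map mxcvg_riccati_map riccati_map0_ge0 Y_ge0 ric_Y_le.
have Psi_le_Z : mxle Psi Z by apply: Psi_le Z_ric; apply/nonneg_mxE.
have Psi_eq_Y : Psi = Y by apply: mxle_anti (mxle_trans Psi_le_Z Z_le) Y_le.
move=> i j; under eq_cvg do rewrite first_passage_sum_iter.
by rewrite Psi_eq_Y; exact: sum_Y.
Qed.

End RiccatiFixpoint.

Theorem lemma2 (R : realType) (np nm : nat) (hp : (0 < np)%N) (hm : (0 < nm)%N)
  (T : 'M[R]_(np + nm)) (hT : is_generator T)
  (Psi : 'M[R]_(np, nm)) (hPsi : is_min_nonneg_riccati_sol T Psi)
  (mu : R) (hmu : 0 < mu) (hmuT : forall i, `|T i i| <= mu) :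
  is_Gmatrix
    (block_mx 0 (invmx (1%:M - mu^-1 *: ulsubmx T) *m ursubmx (Pmx T mu))
              0 (Vmx T Psi mu))
    0
    (block_mx (invmx (1%:M - mu^-1 *: ulsubmx T)) 0 0 0)
    (block_mx 0 Psi 0 (Vmx T Psi mu)).
Proof. exact: is_Gmatrix_up_down (mxcvg_first_passage_sum hT hmu hmuT hPsi). Qed.
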